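(* Let $(X,d)$ be a nonempty compact metric space and let $F:X\rightarrow K(X)$ be a set-valued $(\beta_x,r_x)$-local contraction on $X$. Then: (a) if $X$ is $r$-chainable for some $r>0$ such that $F$ is a $(\beta,r)$-uniform local contraction for some $\beta\in[0,1)$, then $\mathrm{Fix}(F)\neq\varnothing$; (b) if $X$ is the union of finitely many pairwise disjoint connected components and $F(x)$ is connected for every $x\in X$, then there is a positive integer $m$ such that $\mathrm{Fix}(F^{(m)})\neq\varnothing$.
   Context: $K(X)$ is the set of nonempty compact subsets of $X$; $H$ is the Hausdorff distance $H(A,B)=\max\{\sup_{a\in A}d(a,B),\sup_{b\in B}d(b,A)\}$ with $d(y,A)=\inf_{a\in A}d(a,y)$; $B_r(x)=\{z\in X:d(x,z)\le r\}$. $F$ is a set-valued $(\beta_x,r_x)$-local contraction if for every $x\in X$ there exist $r_x>0$ and $\beta_x\in[0,1)$ such that $H(F(y),F(z))\le\beta_x d(y,z)$ for all $y,z\in B_{r_x}(x)$; it is a $(\beta,r)$-uniform local contraction if this holds with $\beta_x=\beta$ and $r_x=r$ independent of $x$. An $r$-chain from $x$ to $y$ is a finite sequence $z_0=x,\ldots,z_n=y$ with $d(z_{i-1},z_i)<r$; $X$ is $r$-chainable if any two points are joined by an $r$-chain. Composition of set-valued maps: $(G\circ F)(x)=\bigcup\{G(y):y\in F(x)\}$, and $F^{(m)}$ is the $m$-fold composition of $F$ with itself. $\mathrm{Fix}(G)=\{x\in X: x\in G(x)\}$. *)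

From HB Require Import structures.
From mathcomp Require Import all_boot all_order all_algebra.
From mathcomp Require Import all_classical all_reals all_analysis.
Set Implicit Arguments. Unset Strict Implicit. Unset Printing Implicit Defensive.
Import Order.TTheory GRing.Theory Num.Theory.
Local Open Scope classical_set_scope.
Local Open Scope ring_scope.

Section Defs.
Context {R : realType} {X : metricType R}.

Definition pdist (y : X) (A : set X) : R := inf [set mdist a y | a in A].

Definition hausdorff_dist (A B : set X) : R :=
  Num.max (sup [set pdist a B | a in A]) (sup [set pdist b A | b in B]).

Definition cball (x : X) (r : R) : set X := [set z | mdist x z <= r].

Definition KX_valued (F : X -> set X) : Prop :=
  forall x, F x !=set0 /\ compact (F x).

Definition local_contraction (F : X -> set X) : Prop :=
  forall x, exists r : R, exists beta : R,
    0 < r /\ 0 <= beta < 1 /\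
    forall y z, cball x r y -> cball x r z ->
      hausdorff_dist (F y) (F z) <= beta * mdist y z.

Definition uniform_local_contraction (F : X -> set X) (beta r : R) : Prop :=
  0 < r /\ 0 <= beta < 1 /\
  forall x y z, cball x r y -> cball x r z ->
    hausdorff_dist (F y) (F z) <= beta * mdist y z.

Definition chainable (r : R) : Prop :=
  forall x y : X, exists (n : nat) (z : nat -> X),
    z 0%N = x /\ z n = y /\ forall i, (i < n)%N -> mdist (z i) (z i.+1) < r.

Definition setcomp (G F : X -> set X) : X -> set X :=
  fun x => \bigcup_(y in F x) G y.

Fixpoint setiter (F : X -> set X) (m : nat) : X -> set X :=
  match m with
  | 0%N => fun x => [set x]
  | m'.+1 => setcomp F (setiter F m')
  end.

Definition Fix (G : X -> set X) : set X := [set x | G x x].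

End Defs.

From HB Require Import structures.
From mathcomp Require Import all_boot all_order all_algebra.
From mathcomp Require Import all_classical all_reals all_analysis.
Import Order.TTheory GRing.Theory Num.Theory.
Local Open Scope classical_set_scope.
Local Open Scope ring_scope.
From mathcomp Require Import ring lra.
Import numFieldTopology.Exports.

(* Both parts reduce to one fact: if some [x] is joined by an [r]-chain to a point
   of [F^(m) x], then [F^(m)] has a fixed point.  On a compact space the local
   contraction is uniform (Lebesgue number), so for [d y z < r] every point of
   [F^(m) y] is within [beta^m d y z + e] of [F^(m) z].  Lifting the chain along
   [F^(m)] from its endpoint gives a chain of the same kind, shorter by the factor
   [beta^m] up to [e]: such chains have infimal length [0].  Hence the continuous
   function [u |-> d(u, F^(m) u)] has infimum [0] on the compact space, and a
   minimum point is a fixed point.  For (a) take [m = 1]; for (b), two points of an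
   orbit lie in a common component, and connected components are [r]-chainable. *)

Lemma exists_pos_le2 (R : realDomainType) (a b : R) : 0 < a -> 0 < b ->
  exists c, [/\ 0 < c, c <= a & c <= b].
Proof.
by move=> a0 b0; exists (Num.min a b); rewrite lt_min a0 b0 ge_min lexx ge_min lexx orbT.
Qed.

Lemma nat_to_fin_collision (T : finType) (f : nat -> T) :
  exists j k, (j < k)%N /\ f j = f k.
Proof.
apply: contrapT => noc.
suff f_inj : injective (fun i : 'I_#|T|.+1 => f i).
  by have := leq_card _ f_inj; rewrite card_ord ltnn.
move=> i j fij; apply: val_inj.
by have [ij|ji|] := ltngtP i j; [case: noc; exists i, j | case: noc; exists j, i |].
Qed.

Section LocalContraction.
Context {R : realType} {X : metricType R}.
Local Notation d := (@mdist R X).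

Lemma nbhs_mdist_lt (x : X) e : 0 < e -> \forall y \near x, d x y < e.
Proof. by move=> e0; have := nbhsx_ballx x _ e0; rewrite ballEmdist. Qed.

Lemma pdist_le (y : X) (A : set X) a : A a -> pdist y A <= d a y.
Proof.
move=> Aa; apply: ge_inf; last by exists a.
by exists 0 => _ [b _ <-]; exact: mdist_ge0.
Qed.

Lemma pdist_approx (y : X) (A : set X) e : A !=set0 -> 0 < e ->
  exists2 a, A a & d a y < pdist y A + e.
Proof.
move=> [a Aa] e0.
have Ainf : has_inf [set d a y | a in A].
  split; first by exists (d a y), a.
  by exists 0 => _ [b _ <-]; exact: mdist_ge0.
by have [_ [b Ab <-] ?] := inf_adherent e0 Ainf; exists b.
Qed.

Lemma pdist_le_hausdorff M (A B : set X) a : (forall x y, d x y <= M) ->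
  A a -> B !=set0 -> pdist a B <= hausdorff_dist A B.
Proof.
move=> dM Aa [b Bb]; rewrite /hausdorff_dist le_max; apply/orP; left.
apply: ub_le_sup; last by exists a.
by exists M => _ [a' _ <-]; exact: le_trans (pdist_le a' _ _ Bb) (dM _ _).
Qed.

(* A one-sided, approximate form of [H(G y, G z) <= k * d y z] for [d y z < r];
   unlike the Hausdorff bound, it is stable under composition. *)
Definition lifting (G : X -> set X) (k r : R) :=
  forall y z a e, d y z < r -> G y a -> 0 < e ->
  exists2 b, G z b & d a b < k * d y z + e.

Lemma lifting_uniform_local_contraction (F : X -> set X) M beta r :
  (forall x, F x !=set0) -> (forall x y, d x y <= M) ->
  uniform_local_contraction F beta r -> lifting F beta r.
Proof.
move=> Fne dM [r0 [_ Fc]] y z a e yz Fya e0.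
have HFyz : hausdorff_dist (F y) (F z) <= beta * d y z.
  by apply: (Fc y); rewrite /cball /= ?mdistxx; exact: ltW.
have := pdist_le_hausdorff _ _ _ _ dM Fya (Fne z).
have [b Fzb ab] := pdist_approx a _ _ (Fne z) e0.
by exists b => //; rewrite metric_sym; lra.
Qed.

Lemma lifting_comp (F G : X -> set X) b g r :
  0 <= b <= 1 -> 0 <= g <= 1 -> lifting F b r -> lifting G g r ->
  lifting (setcomp F G) (b * g) r.
Proof.
move=> /andP[b0 b1] /andP[g0 g1] LF LG y z a e yz [u Gyu Fua] e0.
have [e1 [e1_gt0 e1e e1r]] : exists e1, [/\ 0 < e1, e1 <= e / 2 & e1 <= r - d y z].
  by apply: exists_pos_le2; rewrite ?subr_gt0 ?divr_gt0.
have [u' Gzu' uu'] := LG y z u _ yz Gyu e1_gt0.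
have gyz : g * d y z <= d y z by rewrite ler_piMl ?mdist_ge0.
have uu'r : d u u' < r by lra.
have e2 : 0 < e / 2 by rewrite divr_gt0.
have [c Fu'c ac] := LF u u' a _ uu'r Fua e2.
exists c; first by exists u'.
have : b * d u u' <= b * (g * d y z + e / 2).
  by rewrite ler_wpM2l // ltW // (lt_le_trans uu') // lerD2l.
have : b * (e / 2) <= e / 2 by rewrite ler_piMl // divr_ge0 // ltW.
rewrite mulrDr mulrA; lra.
Qed.

Lemma lifting_setiter (F : X -> set X) b r k :
  0 <= b <= 1 -> lifting F b r -> lifting (setiter F k) (b ^+ k) r.
Proof.
move=> /andP[b0 b1] LF; elim: k => [|k IH].
  by move=> y z a e yz /= -> e0; exists z; rewrite // expr0 mul1r ltrDl.
rewrite exprSr mulrC; apply: lifting_comp => //; first by rewrite b0.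
by rewrite exprn_ge0 ?exprn_ile1.
Qed.

Definition rchain (r : R) (z : nat -> X) n :=
  forall i, (i < n)%N -> d (z i) (z i.+1) < r.

Definition chain_length (z : nat -> X) n := \sum_(i < n) d (z i) (z i.+1).

Definition chain_rcons (z : nat -> X) n b i := if (i <= n)%N then z i else b.

Lemma chain_length_ge0 z n : 0 <= chain_length z n.
Proof. by apply: sumr_ge0 => i _; exact: mdist_ge0. Qed.

Lemma chain_lengthS z n : chain_length z n.+1 = chain_length z n + d (z n) (z n.+1).
Proof. by rewrite /chain_length big_ord_recr. Qed.

Lemma mdist_le_chain_length z n : d (z 0%N) (z n) <= chain_length z n.
Proof.
elim: n => [|n IH]; first by rewrite /chain_length big_ord0 mdistxx.
by rewrite chain_lengthS; apply: le_trans (metric_triangle _ (z n) _) _; rewrite lerD2r.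
Qed.

Lemma chain_rcons_le z n b i : (i <= n)%N -> chain_rcons z n b i = z i.
Proof. by rewrite /chain_rcons => ->. Qed.

Lemma chain_rconsS z n b : chain_rcons z n b n.+1 = b.
Proof. by rewrite /chain_rcons ltnn. Qed.

Lemma rchain_rcons r z n b :
  rchain r z n -> d (z n) b < r -> rchain r (chain_rcons z n b) n.+1.
Proof.
move=> zr zb i; rewrite ltnS leq_eqVlt => /orP[/eqP ->|lt_in].
  by rewrite chain_rconsS chain_rcons_le.
by rewrite !chain_rcons_le // ?zr // ltnW.
Qed.

Lemma chain_length_rcons z n b :
  chain_length (chain_rcons z n b) n.+1 = chain_length z n + d (z n) b.
Proof.
rewrite chain_lengthS chain_rconsS chain_rcons_le //; congr (_ + _).
by apply: eq_bigr => i _; rewrite !chain_rcons_le // ltnW.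
Qed.

Lemma lift_rchain (G : X -> set X) g r n z a e :
  0 <= g <= 1 -> lifting G g r -> rchain r z n -> G (z 0%N) a -> 0 < e ->
  exists w, [/\ w 0%N = a, G (z n) (w n), rchain r w n &
    chain_length w n <= g * chain_length z n + e].
Proof.
move=> /andP[g0 g1] LG; elim: n e => [|n IH] e zr Ga e0.
  exists (fun=> a); split => //.
  by rewrite /chain_length !big_ord0 mulr0 add0r ltW.
have e2 : 0 < e / 2 by rewrite divr_gt0.
have [|w [w0 Gw wr wl]] := IH _ _ Ga e2.
  by move=> i lt_in; apply: zr; rewrite ltnS ltnW.
have zn := zr n (ltnSn n).
have gzn : g * d (z n) (z n.+1) <= d (z n) (z n.+1) by rewrite ler_piMl ?mdist_ge0.
have [e1 [e1_gt0 e1e e1r]] :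
    exists e1, [/\ 0 < e1, e1 <= e / 2 & e1 <= r - g * d (z n) (z n.+1)].
  by apply: exists_pos_le2 => //; rewrite subr_gt0; lra.
have [b Gb wb] := LG _ _ _ _ zn Gw e1_gt0.
exists (chain_rcons w n b); split.
- by rewrite chain_rcons_le.
- by rewrite chain_rconsS.
- by apply: rchain_rcons => //; lra.
- by rewrite chain_length_rcons chain_lengthS mulrDr; lra.
Qed.

Lemma lifting_small_displacement (G : X -> set X) g r :
  0 <= g < 1 -> lifting G g r -> (exists n z, rchain r z n /\ G (z 0%N) (z n)) ->
  forall e, 0 < e -> exists x y, G x y /\ d x y < e.
Proof.
move=> /andP[g0 g1] LG [n0 [z0 [z0r Gz0]]].
pose V := [set s | exists n z, [/\ rchain r z n, G (z 0%N) (z n) & s = chain_length z n]].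
have Vinf : has_inf V.
  split; first by exists (chain_length z0 n0), n0, z0.
  by exists 0 => _ [n [z [_ _ ->]]]; exact: chain_length_ge0.
have infV0 : inf V <= 0.
  rewrite leNgt; apply/negP => infV_gt0.
  pose e := (1 - g) * inf V / 4.
  have e0 : 0 < e by rewrite divr_gt0 // mulr_gt0 // subr_gt0.
  have [_ [n [z [zr Gz ->]]] zl] := inf_adherent e0 Vinf.
  have [|w [w0 Gw wr wl]] := @lift_rchain G g r n z (z n) e _ LG zr Gz e0.
    by rewrite g0 ltW.
  have /(ge_inf (proj2 Vinf)) : V (chain_length w n) by exists n, w; rewrite w0.
  have : g * chain_length z n <= g * (inf V + e) by rewrite ler_wpM2l // ltW.
  have : g * e <= e by rewrite ler_piMl ?ltW.
  have : 4 * e = inf V - g * inf V by rewrite /e; field.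
  rewrite mulrDr; lra.
move=> e e0; have [_ [n [z [zr Gz ->]]] zl] := inf_adherent e0 Vinf.
by exists (z 0%N), (z n); split => //; have := mdist_le_chain_length z n; lra.
Qed.

Lemma setiterSl (F : X -> set X) k x y :
  setiter F k.+1 x y <-> exists2 w, F x w & setiter F k w y.
Proof.
elim: k x y => [|k IH] x y.
  by split=> [[u /= -> Fy]|[w Fw /= ->]]; [exists y | exists x].
split=> [[u /IH[w Fw wu] Fuy]|[w Fw [u wu Fuy]]].
  by exists w => //; exists u.
by exists u => //; apply/IH; exists w.
Qed.

Lemma setiter1 (F : X -> set X) : setiter F 1 = F.
Proof. by apply/funext => x; exact: bigcup_set1. Qed.

Lemma setiter_orbit (F : X -> set X) (s : nat -> X) :
  (forall t, F (s t) (s t.+1)) -> forall k j, setiter F k (s j) (s (j + k)%N).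
Proof.
move=> Fs; elim => [|k IH] j /=; first by rewrite addn0.
by exists (s (j + k)%N); rewrite ?addnS.
Qed.

(* [iter_pdist F k u v] is the distance from [v] to [setiter F k u], taken one
   infimum at a time: this makes it continuous in [u], and by compactness of each
   [F w] it vanishes only when [setiter F k u v]. *)
Fixpoint iter_pdist (F : X -> set X) k u v : R :=
  if k is k'.+1 then inf [set iter_pdist F k' w v | w in F u] else d u v.

Lemma continuous_locally_lipschitz (f : X -> R) r c : 0 < r -> 0 < c ->
  (forall u u', d u u' < r -> f u' <= f u + c * d u u') -> continuous f.
Proof.
move=> r0 c0 fL x; apply/cvgrPdist_lt => e e0; near=> t.
have xt : d x t < r by near: t; exact: nbhs_mdist_lt.
have ce : c * d x t < e.
  by rewrite -ltr_pdivlMl //; near: t; apply: nbhs_mdist_lt; rewrite mulr_gt0 ?invr_gt0.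
have := fL _ _ xt; have := fL t x; rewrite metric_sym => /(_ xt).
by rewrite ltr_distlC; lra.
Unshelve. all: by end_near. Qed.

Section IteratedDistance.
Variable F : X -> set X.
Hypothesis Fne : forall x, F x !=set0.

Lemma iter_pdist_ge0 k u v : 0 <= iter_pdist F k u v.
Proof.
elim: k u => [|k IH] u /=; first exact: mdist_ge0.
have [w Fw] := Fne u.
by apply: lb_le_inf; [exists (iter_pdist F k w v), w | move=> _ [w' _ <-]].
Qed.

Lemma iter_pdistS_le k u w v : F u w -> iter_pdist F k.+1 u v <= iter_pdist F k w v.
Proof.
move=> Fw; apply: ge_inf; last by exists w.
by exists 0 => _ [w' _ <-]; exact: iter_pdist_ge0.
Qed.

Lemma iter_pdist_le_mdist k x y v : setiter F k x y -> iter_pdist F k x v <= d y v.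
Proof.
elim: k x => [|k IH] x; first by move=> /= ->.
by move=> /setiterSl[w Fw /IH]; apply: le_trans (iter_pdistS_le _ _ _ _ Fw).
Qed.

Lemma iter_pdist_lipr k u v v' : iter_pdist F k u v' <= iter_pdist F k u v + d v v'.
Proof.
elim: k u => [|k IH] u /=; first exact: metric_triangle.
have [w Fw] := Fne u.
rewrite -lerBlDr; apply: lb_le_inf; first by exists (iter_pdist F k w v), w.
move=> _ [w' Fw' <-]; rewrite lerBlDr.
exact: le_trans (iter_pdistS_le _ _ _ _ Fw') (IH _).
Qed.

Variables b r : R.
Hypothesis b01 : 0 <= b <= 1.
Hypothesis r_gt0 : 0 < r.
Hypothesis LF : lifting F b r.

Lemma iter_pdist_lipl k u u' v :
  d u u' < r -> iter_pdist F k u' v <= iter_pdist F k u v + d u u'.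
Proof.
case/andP: b01 => b0 b1; elim: k u u' => [|k IH] u u' uu' /=.
  by have := metric_triangle u' u v; rewrite (metric_sym u' u); lra.
have [w Fw] := Fne u.
rewrite -lerBlDr; apply: lb_le_inf; first by exists (iter_pdist F k w v), w.
move=> _ [w1 Fw1 <-]; rewrite lerBlDr; apply/ler_addgt0Pr => e e0.
have [e1 [e1_gt0 e1e e1r]] : exists e1, [/\ 0 < e1, e1 <= e & e1 <= r - d u u'].
  by apply: exists_pos_le2; rewrite ?subr_gt0.
have [w2 Fw2 ww] := LF _ _ _ _ uu' Fw1 e1_gt0.
have : b * d u u' <= d u u' by rewrite ler_piMl ?mdist_ge0.
have := iter_pdistS_le k _ _ v Fw2.
have := IH w1 w2; lra.
Qed.

Lemma continuous_iter_pdist k v : continuous (fun u => iter_pdist F k u v).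
Proof.
apply: (continuous_locally_lipschitz _ _ _ r_gt0 ltr01) => u u' uu'.
by rewrite mul1r; exact: iter_pdist_lipl.
Qed.

Lemma continuous_iter_pdist_diag k : continuous (fun u => iter_pdist F k u u).
Proof.
apply: (continuous_locally_lipschitz _ _ _ r_gt0 (_ : 0 < 2)) => // u u' uu'.
have := iter_pdist_lipl k _ _ u' uu'; have := iter_pdist_lipr k u u u'; lra.
Qed.

Hypothesis Fcompact : forall x, compact (F x).

Lemma iter_pdist_eq0 k u v : iter_pdist F k u v = 0 -> setiter F k u v.
Proof.
elim: k u => [|k IH] u /=; first by move/mdist_positivity ->.
move=> infF0.
have [c /set_mem Fuc cmin] := compact_EVT_min (Fne u) (Fcompact u)
  (@continuous_subspaceT _ _ (F u) _ (continuous_iter_pdist k v)).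
apply/setiterSl; exists c => //; apply: IH; apply/eqP.
rewrite eq_le iter_pdist_ge0 andbT -infF0.
apply: lb_le_inf; first by have [w Fw] := Fne u; exists (iter_pdist F k w v), w.
by move=> _ [w Fw <-]; apply: cmin; rewrite inE.
Qed.

End IteratedDistance.

Lemma compact_mdist_bounded : compact [set: X] -> exists M, forall x y, d x y <= M.
Proof.
move=> /compact_near_coveringP Xc.
have [[x0 _]|X0] := pselect ([set: X] !=set0); last first.
  by exists 0 => x; have [] := X0; exists x.
have : \forall M \near +oo, [set: X] `<=` [set y | d x0 y <= M].
  apply: Xc => x _; near=> y M => /=.
  have : d x y < 1 by near: y; exact: nbhs_mdist_lt.
  have : d x0 x + 1 <= M by near: M; apply: nbhs_pinfty_ge; exact: num_real.
  by have := metric_triangle x0 x y; lra.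
move=> /pinfty_ex_gt0[M _ x0M]; exists (M + M) => x y.
have := metric_triangle x x0 y; rewrite (metric_sym x x0).
by have := x0M x I; have := x0M y I; rewrite /=; lra.
Unshelve. all: by end_near. Qed.

(* Lebesgue number argument: the radius [t] and the constant [1 - t] work near
   every point as soon as [t] is small enough, hence uniformly by compactness. *)
Lemma compact_uniform_local_contraction (F : X -> set X) :
  compact [set: X] -> local_contraction F ->
  exists beta r, uniform_local_contraction F beta r.
Proof.
move=> /compact_near_coveringP Xc LC.
have : \forall t \near 0^'+, [set: X] `<=` [set y | forall z, d y z < t ->
    hausdorff_dist (F y) (F z) <= (1 - t) * d y z].
  apply: Xc => x _; have [r [beta [r0 [/andP[b0 b1] Fx]]]] := LC x.
  near=> y t => z /= yz.
  have xy : d x y < r / 2 by near: y; apply: nbhs_mdist_lt; rewrite divr_gt0.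
  have tr : t < r / 2 by near: t; apply: nbhs_right_lt; rewrite divr_gt0.
  have tb : t <= 1 - beta by near: t; apply: nbhs_right_le; rewrite subr_gt0.
  apply: le_trans (Fx y z _ _) _; rewrite /cball /=.
  - lra.
  - by have := metric_triangle x y z; lra.
  - by rewrite ler_wpM2r ?mdist_ge0 //; lra.
move=> Ft; near (0 : R)^'+ => t.
have t0 : 0 < t by near: t; exact: nbhs_right_gt.
have t1 : t <= 1 by near: t; exact: nbhs_right_le.
exists (1 - t), (t / 3); split; first by rewrite divr_gt0.
split=> [|x y z]; first by apply/andP; split; lra.
rewrite /cball /= => xy xz; apply: (near Ft t) => //.
by have := metric_triangle y x z; rewrite (metric_sym y x); lra.
Unshelve. all: by end_near. Qed.

Lemma fixed_point_of_rchain (F : X -> set X) beta r m :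
  compact [set: X] -> KX_valued F -> uniform_local_contraction F beta r ->
  (0 < m)%N -> (exists n z, rchain r z n /\ setiter F m (z 0%N) (z n)) ->
  Fix (setiter F m) !=set0.
Proof.
move=> Xc KF Fc m_gt0 chain.
have Fne x : F x !=set0 by case: (KF x).
have Fcompact x : compact (F x) by case: (KF x).
have [M dM] := compact_mdist_bounded Xc.
have [r_gt0 [/andP[b0 b1] _]] := Fc.
have b01 : 0 <= beta <= 1 by rewrite b0 ltW.
have LF := lifting_uniform_local_contraction _ _ _ _ Fne dM Fc.
have bm : 0 <= beta ^+ m < 1 by rewrite exprn_ge0 // exprn_ilt1 // -lt0n.
have small := lifting_small_displacement _ _ _ bm (lifting_setiter _ _ _ m b01 LF) chain.
have Xne : [set: X] !=set0 by have [_ [z _]] := chain; exists (z 0%N).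
have [x _ xmin] := compact_EVT_min Xne Xc
  (@continuous_subspaceT _ _ _ _ (continuous_iter_pdist_diag _ Fne _ _ b01 r_gt0 LF m)).
exists x; apply: (iter_pdist_eq0 _ Fne _ _ b01 r_gt0 LF Fcompact).
apply/eqP; rewrite eq_le iter_pdist_ge0 // andbT.
apply/ler_addgt0Pr => e e0; rewrite add0r.
have [y [y' [Fmyy' yy']]] := small e e0.
have := xmin y (mem_set I); have := iter_pdist_le_mdist _ Fne _ _ _ y Fmyy'.
by rewrite metric_sym; lra.
Qed.

Lemma rchain_connected_component r x y : 0 < r ->
  connected_component [set: X] x y ->
  exists n z, [/\ z 0%N = x, z n = y & rchain r z n].
Proof.
move=> r_gt0 xy.
pose A := [set y | exists n z, [/\ z 0%N = x, z n = y & rchain r z n]].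
have A_step y' y'' : A y' -> d y' y'' < r -> A y''.
  move=> [n [z [z0 zn zr]]] y'y''; exists n.+1, (chain_rcons z n y''); split.
  - by rewrite chain_rcons_le.
  - by rewrite chain_rconsS.
  - by apply: rchain_rcons; rewrite ?zn.
have Aopen : open A.
  rewrite openE => y' Ay'; apply: (filterS _ (nbhs_mdist_lt y' _ r_gt0)).
  by move=> y''; exact: A_step.
have Aclosed : closed A.
  move=> y' /(_ _ (nbhs_mdist_lt y' _ r_gt0))[y'' [Ay'' y'y'']].
  by apply: A_step Ay'' _; rewrite metric_sym.
have Ax : A x by exists 0%N, (fun=> x).
have ccA : connected_component [set: X] x `&` A = connected_component [set: X] x.
  apply: component_connected; [|by exists A..].
  by exists x; split=> //; exact: connected_component_refl.
by move: xy; rewrite -ccA => -[].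
Qed.

Lemma rchain_setiter_of_finite_components (F : X -> set X) r n (C : 'I_n -> set X) :
  0 < r -> (forall x, F x !=set0) -> [set: X] !=set0 ->
  (forall i, exists x, C i = connected_component [set: X] x) ->
  \bigcup_(i in [set: 'I_n]) C i = [set: X] ->
  exists2 m, (0 < m)%N & exists n z, rchain r z n /\ setiter F m (z 0%N) (z n).
Proof.
move=> r_gt0 Fne [x0 _] Ccc Ccover.
have /choice[f Ff] : forall x, exists y, F x y by exact: Fne.
pose s t := iter t f x0.
have Fs t : F (s t) (s t.+1) by rewrite /s iterS; exact: Ff.
have /choice[ci Cci] : forall x, exists i, C i x.
  by move=> x; have : [set: X] x by []; rewrite -Ccover => -[i _ Cix]; exists i.
have [j [k [jk /= cijk]]] := nat_to_fin_collision _ (ci \o s).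
have [w Cw] := Ccc (ci (s k)).
have sjk : connected_component [set: X] (s j) (s k).
  have := Cci (s j); have := Cci (s k); rewrite cijk Cw => wk wj.
  exact: connected_component_trans (connected_component_sym wj) wk.
have [n' [z [z0 zn zr]]] := rchain_connected_component _ _ _ r_gt0 sjk.
exists (k - j)%N; first by rewrite subn_gt0.
exists n', z; split => //; rewrite z0 zn -{2}(subnKC (ltnW jk)).
exact: setiter_orbit Fs _ _.
Qed.

End LocalContraction.

Theorem proposition11 (R : realType) (X : metricType R) (F : X -> set X) :
  [set: X] !=set0 -> compact [set: X] ->
  KX_valued F -> local_contraction F ->
  (forall r beta : R, 0 < r -> 0 <= beta < 1 ->
     chainable (X := X) r -> uniform_local_contraction F beta r ->
     Fix F !=set0) /\
  ((exists (n : nat) (C : 'I_n -> set X),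
      (forall i, exists x, C i = connected_component [set: X] x) /\
      (forall i j, i != j -> C i `&` C j = set0) /\
      \bigcup_(i in [set: 'I_n]) C i = [set: X]) ->
   (forall x, connected (F x)) ->
   exists m : nat, (0 < m)%N /\ Fix (setiter F m) !=set0).
Proof.
move=> Xne Xc KF LC; have Fne x : F x !=set0 by case: (KF x).
split=> [r beta _ _ r_chainable Fc | [n [C [Ccc [_ Ccover]]]] _].
  have [x0 _] := Xne; have [y0 Fx0y0] := Fne x0.
  have [n [z [z0 [zn zr]]]] := r_chainable x0 y0.
  rewrite -(setiter1 F); apply: (fixed_point_of_rchain _ _ _ _ Xc KF Fc) => //.
  by exists n, z; rewrite setiter1 z0 zn.
have [beta [r Fc]] := compact_uniform_local_contraction F Xc LC.
have [m m_gt0 chain] :=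
  rchain_setiter_of_finite_components F r n C (proj1 Fc) Fne Xne Ccc Ccover.
by exists m; split => //; exact: fixed_point_of_rchain _ _ _ _ Xc KF Fc m_gt0 chain.
Qed.
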